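(* Let $h>0$, $K>0$, $g\in C^1(\mathbb{R}_+,\mathbb{R}_+)$ with $g(0)=0$, $g(K)=K$ and $g'(0+)=p>1$, and let $\psi$ be a nonnegative solution of $x'(t)=-x(t)+g(x(t-h))$ on $\mathbb{R}$ with $\psi(-\infty)=0$, $\psi(+\infty)=K$. Let $\lambda$ be the positive root of $z=-1+pe^{-zh}$. If the finite limit $g''(0+)$ exists, then for each $\delta>0$ there is $t_0\in\mathbb{R}$ such that, as $t\to-\infty$, $$\psi(t-t_0)=e^{\lambda t}+O(e^{(2\lambda-\delta)t}),\qquad \psi'(t-t_0)=\lambda e^{\lambda t}+O(e^{(2\lambda-\delta)t}),$$ and hence $\psi'>0$ on some semi-axis $(-\infty,T]$. Moreover, if $g''$ exists and is bounded on $[0,\epsilon)$ for some $\epsilon>0$, then such a solution $\psi$ is unique up to a translation in $t$. *)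

From Stdlib Require Import Reals.
From Coquelicot Require Import Coquelicot.
Open Scope R_scope.

(* g is C^1 on R_+ = [0,+oo) with derivative dg (one-sided at 0) and maps
   R_+ into R_+.  Values of g on (-oo,0) are irrelevant. *)
Definition C1_Rplus_Rplus (g dg : R -> R) : Prop :=
  (forall x, 0 < x -> is_derive g x (dg x)) /\
  (forall x, 0 < x -> continuous dg x) /\
  filterlim (fun x => (g x - g 0) / x) (at_right 0) (locally (dg 0)) /\
  filterlim dg (at_right 0) (locally (dg 0)) /\
  (forall x, 0 <= x -> 0 <= g x).

Definition is_solution (h : R) (g psi : R -> R) : Prop :=
  forall t, is_derive psi t (- psi t + g (psi (t - h))).

Definition is_front (h K : R) (g psi : R -> R) : Prop :=
  is_solution h g psi /\ (forall t, 0 <= psi t) /\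
  is_lim psi m_infty 0 /\ is_lim psi p_infty K.

(* Near [-oo] a front is small, so it solves the linearisation [x' = - x + p x (t - h)] up to
   a quadratic error.  The functional [psi t e^(-mu t) + (1 + mu) int_(t-h)^t psi e^(-mu s) ds]
   is nondecreasing wherever [g x >= (1 + mu) e^(mu h) x]; this gives first [psi = O (e^(mu t))]
   for some [mu < lam], and then, the quadratic error being [O (e^(2 mu t))] with [2 mu > lam],
   [psi = O (e^(lam t))].  The rescaled front [u = psi e^(-lam t)] then satisfies
   [u' = (1 + lam) (u (t - h) - u t) + O (e^(lam t))]; its oscillation over successive delay
   windows contracts geometrically, so [u] converges to some [L0] at rate [e^(lam t)], which
   yields the expansions after a translation.  Finally, [L0 > 0] and uniqueness both rest on one
   fact: for [nu > lam], two solutions differing by [O (e^(nu t))] at [-oo] coincide, because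
   their difference obeys a linear delay inequality whose [O (e^(nu t))] solutions vanish, and
   solutions agreeing on a half-line agree everywhere by the method of steps. *)

From Stdlib Require Import Reals Lra ZArith.
From Coquelicot Require Import Coquelicot.
Open Scope R_scope.

Lemma is_derive_continuity_pt (f : R -> R) x l : is_derive f x l -> continuity_pt f x.
Proof.
  intros H. apply continuity_pt_filterlim.
  apply (ex_derive_continuous (K := R_AbsRing) (V := R_NormedModule)). now exists l.
Qed.

Lemma is_derive_eq (f : R -> R) (x l l' : R) : is_derive f x l -> l = l' -> is_derive f x l'.
Proof. now intros H <-. Qed.

Lemma MVT_increment (f df : R -> R) a b c k : a <= b ->
  (forall x, a <= x <= b -> is_derive f x (df x)) ->
  (forall x, a <= x <= b -> Rabs (df x - c) <= k) ->
  Rabs (f b - f a - c * (b - a)) <= k * (b - a).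
Proof.
  intros Hab Hd Hk.
  destruct (MVT_gen f a b df) as [x [Hx Hfx]].
  - intros x Hx. rewrite Rmin_left, Rmax_right in Hx by lra. apply Hd; lra.
  - intros x Hx. rewrite Rmin_left, Rmax_right in Hx by lra.
    apply (is_derive_continuity_pt f x (df x)), Hd; lra.
  - rewrite Rmin_left, Rmax_right in Hx by lra.
    rewrite Hfx. replace (df x * (b - a) - c * (b - a)) with ((df x - c) * (b - a)) by ring.
    rewrite Rabs_mult, (Rabs_pos_eq (b - a)) by lra.
    apply Rmult_le_compat_r; [lra | apply Hk; lra].
Qed.

Lemma derive_nonpos_antitone (f df : R -> R) a b : a <= b ->
  (forall x, a <= x <= b -> is_derive f x (df x)) ->
  (forall x, a <= x <= b -> df x <= 0) -> f b <= f a.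
Proof.
  intros Hab Hd Hs.
  destruct (MVT_gen f a b df) as [x [Hx Hfx]].
  - intros x Hx. rewrite Rmin_left, Rmax_right in Hx by lra. apply Hd; lra.
  - intros x Hx. rewrite Rmin_left, Rmax_right in Hx by lra.
    apply (is_derive_continuity_pt f x (df x)), Hd; lra.
  - rewrite Rmin_left, Rmax_right in Hx by lra.
    assert (df x * (b - a) <= 0) by (apply Rmult_le_0_r; [apply Hs|]; lra). lra.
Qed.

Lemma derive_nonneg_monotone (f df : R -> R) a b : a <= b ->
  (forall x, a <= x <= b -> is_derive f x (df x)) ->
  (forall x, a <= x <= b -> 0 <= df x) -> f a <= f b.
Proof.
  intros Hab Hd Hs.
  enough (- f b <= - f a) by lra.
  apply (derive_nonpos_antitone (fun x => - f x) (fun x => - df x)); auto.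
  - intros x Hx. now apply (is_derive_opp f x (df x)), Hd.
  - intros x Hx. specialize (Hs x Hx). lra.
Qed.

Lemma exp_le x y : x <= y -> exp x <= exp y.
Proof. intros [H | ->]; [now apply Rlt_le, exp_increasing | lra]. Qed.

Lemma exp_opp_mul a t : exp (- a * t) * exp (a * t) = 1.
Proof. rewrite <- exp_plus, <- exp_0. f_equal. ring. Qed.

Lemma unscale_exp a t x : x * exp (- a * t) * exp (a * t) = x.
Proof. now rewrite Rmult_assoc, exp_opp_mul, Rmult_1_r. Qed.

Lemma exp_sqr x : exp x ^ 2 = exp (2 * x).
Proof. replace (2 * x) with (x + x) by ring. rewrite exp_plus. ring. Qed.

Lemma scaled_estimate_shift (f : R -> R) lam L0 Kc T c :
  (forall t, t <= T -> Rabs (f t * exp (- lam * t) - L0) <= Kc * exp (lam * t)) ->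
  forall t, t <= T - c ->
  Rabs (f (t + c) - L0 * exp (lam * c) * exp (lam * t))
    <= Kc * exp (2 * lam * c) * exp (2 * lam * t).
Proof.
  intros Hf t Ht. set (s := t + c). specialize (Hf s ltac:(unfold s; lra)).
  assert (E1 : exp (lam * c) * exp (lam * t) = exp (lam * s))
    by (rewrite <- exp_plus; f_equal; unfold s; ring).
  assert (E2 : exp (2 * lam * c) * exp (2 * lam * t) = exp (lam * s) * exp (lam * s))
    by (rewrite <- !exp_plus; f_equal; unfold s; ring).
  rewrite <- (unscale_exp lam s (f s)), (Rmult_assoc L0), E1, (Rmult_assoc Kc), E2.
  replace (f s * exp (- lam * s) * exp (lam * s) - L0 * exp (lam * s))
    with ((f s * exp (- lam * s) - L0) * exp (lam * s)) by ring.
  rewrite Rabs_mult, (Rabs_pos_eq (exp _)) by apply Rlt_le, exp_pos.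
  rewrite <- Rmult_assoc. apply Rmult_le_compat_r; [apply Rlt_le, exp_pos | exact Hf].
Qed.

Lemma exp_mul_small (S eta k t : R) : 0 <= S -> 0 < eta -> 0 < k ->
  exists s, s < t /\ S * exp (k * s) < eta.
Proof.
  intros HS He Hk.
  set (s := Rmin (t - 1) (ln (eta / (S + 1)) / k)).
  exists s. split; [unfold s; generalize (Rmin_l (t - 1) (ln (eta / (S + 1)) / k)); lra |].
  assert (Hs : k * s <= ln (eta / (S + 1))).
  { replace (ln (eta / (S + 1))) with (k * (ln (eta / (S + 1)) / k)) by (field; lra).
    apply Rmult_le_compat_l; [lra | apply Rmin_r]. }
  apply exp_le in Hs. rewrite exp_ln in Hs by (apply Rdiv_lt_0_compat; lra).
  apply Rle_lt_trans with (S * (eta / (S + 1))); [now apply Rmult_le_compat_l |].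
  apply Rmult_lt_reg_r with (S + 1); [lra |].
  replace (S * (eta / (S + 1)) * (S + 1)) with (S * eta) by (field; lra). nra.
Qed.

Lemma pow_mul_small (th B eta : R) : 0 <= th < 1 -> 0 <= B -> 0 < eta ->
  exists N : nat, th ^ N * B < eta.
Proof.
  intros Hth HB He.
  destruct (pow_lt_1_zero th ltac:(rewrite Rabs_pos_eq; lra) (eta / (B + 1))
              ltac:(apply Rdiv_lt_0_compat; lra)) as [N HN].
  exists N. specialize (HN N (le_n N)). rewrite Rabs_pos_eq in HN by (apply pow_le; lra).
  assert (0 <= th ^ N) by (apply pow_le; lra).
  apply Rmult_lt_compat_r with (r := B + 1) in HN; [| lra].
  replace (eta / (B + 1) * (B + 1)) with eta in HN by (field; lra). nra.
Qed.

Lemma exists_nat_ge (x : R) : exists n : nat, x <= INR n.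
Proof.
  destruct (archimed x) as [Ha _].
  destruct (Rle_dec x 0) as [H | H]; [exists 0%nat; simpl; lra |].
  assert (Hz : (0 <= up x)%Z) by (apply le_IZR; lra).
  exists (Z.to_nat (up x)). rewrite INR_IZR_INZ, Z2Nat.id by auto. lra.
Qed.

Lemma at_right_0_spec (f : R -> R) l :
  filterlim f (at_right 0) (locally l) ->
  forall eta, 0 < eta -> exists d, 0 < d /\ forall x, 0 < x < d -> Rabs (f x - l) < eta.
Proof.
  intros H eta He.
  destruct (proj1 (filterlim_locally f l) H (mkposreal eta He)) as [d Hd].
  exists d. split; [apply cond_pos |].
  intros x Hx. apply (Hd x); [| lra].
  change (Rabs (x - 0) < d). rewrite Rminus_0_r, Rabs_pos_eq; lra.
Qed.

Lemma le_of_at_right_0 (f : R -> R) l a B x : 0 < x ->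
  (forall eta, 0 < eta -> exists d, 0 < d /\ forall s, 0 < s < d -> Rabs (f s - l) < eta) ->
  (forall s, 0 < s < x -> Rabs (a - f s) <= B) -> Rabs (a - l) <= B.
Proof.
  intros Hx Hl Hb. apply Rle_plus_epsilon. intros eta He.
  destruct (Hl eta He) as [d [Hd Hf]].
  set (s := Rmin (x / 2) (d / 2)).
  assert (0 < s) by (apply Rmin_pos; lra).
  assert (s <= x / 2) by apply Rmin_l. assert (s <= d / 2) by apply Rmin_r.
  replace (a - l) with ((a - f s) + (f s - l)) by ring.
  eapply Rle_trans; [apply Rabs_triang |].
  specialize (Hf s ltac:(lra)). specialize (Hb s ltac:(lra)). lra.
Qed.

Lemma small_near_m_infty (psi : R -> R) : is_lim psi m_infty 0 ->
  forall eps, 0 < eps -> exists T, forall t, t <= T -> Rabs (psi t) < eps.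
Proof.
  intros H eps He. apply is_lim_spec in H.
  destruct (H (mkposreal eps He)) as [M HM].
  exists (M - 1). intros t Ht. specialize (HM t ltac:(lra)). simpl in HM.
  now rewrite Rminus_0_r in HM.
Qed.

Lemma nonzero_of_lim_p_infty (psi : R -> R) K : 0 < K -> is_lim psi p_infty K ->
  exists t, psi t <> 0.
Proof.
  intros HK H. apply is_lim_spec in H.
  destruct (H (mkposreal K HK)) as [M HM].
  exists (M + 1). specialize (HM (M + 1) ltac:(lra)). simpl in HM.
  intros E. rewrite E, Rminus_0_l, Rabs_Ropp, Rabs_pos_eq in HM; lra.
Qed.

Lemma is_derive_RInt_window (u : R -> R) h t :
  (forall x, continuous u x) ->
  is_derive (fun s => RInt u (s - h) s) t (u t - u (t - h)).
Proof.
  intros Hc.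
  assert (Hex : forall a b, ex_RInt u a b)
    by (intros a b; apply (ex_RInt_continuous (V := R_CompleteNormedModule)); auto).
  assert (HI : forall x, is_derive (RInt u 0) x (u x)).
  { intros x. apply is_derive_RInt with 0; [| auto].
    apply filter_forall. intros y. now apply RInt_correct. }
  apply is_derive_ext with (fun s => RInt u 0 s - RInt u 0 (s - h)).
  { intros s. rewrite <- (RInt_Chasles u 0 (s - h) s (Hex _ _) (Hex _ _)).
    unfold plus; simpl. ring. }
  apply (is_derive_minus (RInt u 0) (fun s => RInt u 0 (s - h))); [apply HI |].
  replace (u (t - h)) with (1 * u (t - h)) by ring.
  apply (is_derive_comp (RInt u 0) (fun s => s - h)); [apply HI |].
  auto_derive; auto; ring.
Qed.

Section Germ_at_0.

Variables (g dg : R -> R) (p : R).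
Hypothesis g_derive : forall x, 0 < x -> is_derive g x (dg x).
Hypothesis g_slope_0 : filterlim (fun x => (g x - g 0) / x) (at_right 0) (locally p).
Hypothesis dg_lim_0 : filterlim dg (at_right 0) (locally p).
Hypothesis g_0 : g 0 = 0.

Lemma germ_linear_bounds eta : 0 < eta -> exists d, 0 < d /\
  forall x, 0 <= x < d -> (p - eta) * x <= g x <= (p + eta) * x.
Proof.
  intros He. destruct (at_right_0_spec _ _ g_slope_0 eta He) as [d [Hd Hx]].
  exists d. split; [exact Hd |]. intros x [Hx0 Hxd].
  destruct (Req_dec x 0) as [-> | Hn]; [rewrite g_0; lra |].
  specialize (Hx x ltac:(lra)). rewrite g_0, Rminus_0_r in Hx.
  apply Rabs_lt_between in Hx.
  replace (g x) with (g x / x * x) by (field; exact Hn).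
  split; apply Rmult_le_compat_r; lra.
Qed.

Lemma germ_lipschitz eta : 0 <= p -> 0 < eta -> exists d, 0 < d /\
  forall a b, 0 <= a < d -> 0 <= b < d -> Rabs (g a - g b) <= (p + eta) * Rabs (a - b).
Proof.
  intros Hp He.
  destruct (germ_linear_bounds eta He) as [d1 [Hd1 H1]].
  destruct (at_right_0_spec _ _ dg_lim_0 eta He) as [d2 [Hd2 H2]].
  exists (Rmin d1 d2). split; [now apply Rmin_pos |].
  assert (Hm1 := Rmin_l d1 d2). assert (Hm2 := Rmin_r d1 d2).
  assert (Hle : forall a b, 0 <= a <= b -> b < Rmin d1 d2 ->
            Rabs (g b - g a) <= (p + eta) * (b - a)).
  { intros a b Hab Hb.
    destruct (Req_dec a 0) as [-> | Ha].
    - rewrite g_0, !Rminus_0_r, Rabs_le_between. destruct (H1 b ltac:(lra)).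
      assert (0 <= p * b) by (apply Rmult_le_pos; lra).
      rewrite Rmult_plus_distr_r in *; rewrite Rmult_minus_distr_r in *; lra.
    - replace (g b - g a) with (g b - g a - 0 * (b - a)) by ring.
      apply (MVT_increment g dg); [lra | intros x Hx; apply g_derive; lra |].
      intros x Hx. specialize (H2 x ltac:(lra)). apply Rabs_lt_between in H2.
      apply Rabs_le; lra. }
  intros a b Ha Hb. destruct (Rle_dec a b).
  - rewrite Rabs_minus_sym, (Rabs_minus_sym a b), (Rabs_pos_eq (b - a)) by lra.
    apply Hle; lra.
  - rewrite (Rabs_pos_eq (a - b)) by lra. apply Hle; lra.
Qed.

Variables (d2 : R -> R) (e M : R).
Hypothesis dg_derive : forall x, 0 < x < e -> is_derive dg x (d2 x).
Hypothesis d2_bound : forall x, 0 < x < e -> Rabs (d2 x) <= M.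

Lemma dg_linear_bound x : 0 < x < e -> Rabs (dg x - p) <= M * x.
Proof.
  intros Hx. apply (le_of_at_right_0 dg p (dg x) (M * x) x); [lra | |].
  - intros eta He. exact (at_right_0_spec _ _ dg_lim_0 eta He).
  - intros s Hs. replace (dg x - dg s) with (dg x - dg s - 0 * (x - s)) by ring.
    eapply Rle_trans.
    + apply (MVT_increment dg d2); [lra | intros z Hz; apply dg_derive; lra |].
      intros z Hz. rewrite Rminus_0_r. apply d2_bound; lra.
    + assert (0 <= M) by (generalize (d2_bound x Hx) (Rabs_pos (d2 x)); lra). nra.
Qed.

Lemma germ_quadratic x : 0 <= x < e -> Rabs (g x - p * x) <= M * x ^ 2.
Proof.
  intros Hx. destruct (Req_dec x 0) as [-> | Hx0].
  { rewrite g_0. replace (0 - p * 0) with 0 by ring. rewrite Rabs_R0. lra. }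
  assert (HM : 0 <= M) by (generalize (d2_bound x ltac:(lra)) (Rabs_pos (d2 x)); lra).
  rewrite <- (Rminus_0_r (g x - p * x)).
  apply (le_of_at_right_0 (fun s => g s - p * s) 0 _ _ x); [lra | |].
  - intros eta He. destruct (germ_linear_bounds 1 ltac:(lra)) as [d [Hd Hlin]].
    exists (Rmin d eta). split; [now apply Rmin_pos |].
    intros s Hs. generalize (Rmin_l d eta) (Rmin_r d eta); intros.
    destruct (Hlin s ltac:(lra)). rewrite Rminus_0_r. apply Rabs_def1; lra.
  - intros s Hs.
    replace (g x - p * x - (g s - p * s)) with (g x - g s - p * (x - s)) by ring.
    apply Rle_trans with (M * x * (x - s)).
    2:{ assert (0 <= M * x * s) by (repeat apply Rmult_le_pos; lra). simpl. lra. }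
    apply (MVT_increment g dg); [lra | intros z Hz; apply g_derive; lra |].
    intros z Hz. eapply Rle_trans; [apply dg_linear_bound; lra |].
    apply Rmult_le_compat_l; lra.
Qed.

End Germ_at_0.

Lemma germ_quadratic_of_d2_lim (g dg d2 : R -> R) p eps q :
  (forall x, 0 < x -> is_derive g x (dg x)) ->
  filterlim (fun x => (g x - g 0) / x) (at_right 0) (locally p) ->
  filterlim dg (at_right 0) (locally p) -> g 0 = 0 -> 0 < eps ->
  (forall x, 0 < x < eps -> is_derive dg x (d2 x)) -> filterlim d2 (at_right 0) (locally q) ->
  exists x0, 0 < x0 /\ forall x, 0 <= x < x0 -> Rabs (g x - p * x) <= (Rabs q + 1) * x ^ 2.
Proof.
  intros Hgd Hslope Hdg g0 He Hd2 Hq.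
  destruct (at_right_0_spec d2 q Hq 1 ltac:(lra)) as [d [Hd Hnear]].
  exists (Rmin eps d). split; [now apply Rmin_pos |].
  generalize (Rmin_l eps d) (Rmin_r eps d). intros Hmin_l Hmin_r x Hx.
  apply (germ_quadratic g dg p Hgd Hslope Hdg g0 d2 (Rmin eps d) (Rabs q + 1)); [| | exact Hx].
  - intros z Hz. apply Hd2. lra.
  - intros z Hz. specialize (Hnear z ltac:(lra)).
    generalize (Rabs_triang_inv (d2 z) q). lra.
Qed.

Section Delay_inequality.

Variables (w q : R -> R) (h nu P T : R).
Hypotheses (h_ge0 : 0 <= h) (nu_gt0 : 0 < nu) (P_ge0 : 0 <= P).
Hypothesis w_derive : forall t, t <= T -> is_derive w t (- w t + q t).

Let theta := P * exp (- nu * h) / (1 + nu).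

Lemma theta_ge0 : 0 <= theta.
Proof.
  unfold theta. apply Rmult_le_pos; [apply Rmult_le_pos; [lra | apply Rlt_le, exp_pos] |].
  apply Rlt_le, Rinv_0_lt_compat; lra.
Qed.

(* [exp t * w t - theta * S * exp ((1 + nu) t)] is nonincreasing and [<= 0] near [-oo]. *)
Lemma delay_ineq_step S :
  (forall t, t <= T -> q t <= P * Rabs (w (t - h))) ->
  (forall t, t <= T -> Rabs (w t) <= S * exp (nu * t)) ->
  forall t, t <= T -> w t <= theta * S * exp (nu * t).
Proof.
  intros Hq Hb t Ht.
  assert (HS : 0 <= S).
  { generalize (Hb t Ht) (Rabs_pos (w t)) (exp_pos (nu * t)). nra. }
  set (phi := fun s => exp s * w s - theta * S * exp ((1 + nu) * s)).
  assert (Hmono : forall s, s <= t -> phi t <= phi s).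
  { intros s Hs.
    apply (derive_nonpos_antitone phi
             (fun x => exp x * q x - P * exp (- nu * h) * S * exp ((1 + nu) * x))); auto.
    - intros x Hx. unfold phi.
      assert (E := is_derive_unique _ _ _ (w_derive x ltac:(lra))).
      auto_derive; [eexists; apply (w_derive x); lra |].
      change (Derive (fun x : R => w x) x) with (Derive w x). rewrite E.
      unfold theta. field. lra.
    - intros x Hx.
      assert (Q : q x <= P * (S * exp (nu * (x - h)))).
      { eapply Rle_trans; [apply Hq; lra |]. apply Rmult_le_compat_l; auto. apply Hb; lra. }
      assert (E : exp x * (P * (S * exp (nu * (x - h))))
                  = P * exp (- nu * h) * S * exp ((1 + nu) * x)).
      { replace ((1 + nu) * x) with (x + nu * (x - h) + nu * h) by ring.
        rewrite !exp_plus.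
        transitivity (P * S * exp x * exp (nu * (x - h)) * (exp (- nu * h) * exp (nu * h)));
          [rewrite exp_opp_mul |]; ring. }
      rewrite <- E. generalize (exp_pos x). nra. }
  assert (Hphi : phi t <= 0).
  { apply Rle_plus_epsilon. intros eta He. rewrite Rplus_0_l.
    destruct (exp_mul_small S eta (1 + nu) t HS He ltac:(lra)) as [s [Hs1 Hs2]].
    apply Rle_trans with (phi s); [apply Hmono; lra |].
    assert (B : exp s * w s <= S * exp ((1 + nu) * s)).
    { replace ((1 + nu) * s) with (s + nu * s) by ring. rewrite exp_plus.
      generalize (Hb s ltac:(lra)) (Rle_abs (w s)) (exp_pos s). nra. }
    assert (0 <= theta * S * exp ((1 + nu) * s)).
    { apply Rmult_le_pos; [apply Rmult_le_pos; [apply theta_ge0 | lra] | apply Rlt_le, exp_pos]. }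
    unfold phi. lra. }
  unfold phi in Hphi.
  replace ((1 + nu) * t) with (t + nu * t) in Hphi by ring. rewrite exp_plus in Hphi.
  apply Rmult_le_reg_l with (exp t); [apply exp_pos | lra].
Qed.

End Delay_inequality.

Lemma delay_ineq_vanish (w q : R -> R) h nu P B T : 0 <= h -> 0 < nu -> 0 <= P ->
  P * exp (- nu * h) < 1 + nu ->
  (forall t, t <= T -> is_derive w t (- w t + q t)) ->
  (forall t, t <= T -> Rabs (q t) <= P * Rabs (w (t - h))) ->
  (forall t, t <= T -> Rabs (w t) <= B * exp (nu * t)) ->
  forall t, t <= T -> w t = 0.
Proof.
  intros Hh Hnu HP Hth Hd Hq Hb.
  set (th := P * exp (- nu * h) / (1 + nu)).
  assert (Hth0 : 0 <= th) by exact (theta_ge0 h nu P Hnu HP).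
  assert (Hth1 : th < 1).
  { unfold th. apply Rmult_lt_reg_r with (1 + nu); [lra |].
    replace (P * exp (- nu * h) / (1 + nu) * (1 + nu)) with (P * exp (- nu * h))
      by (field; lra). lra. }
  assert (Hneg : forall t, t <= T -> is_derive (fun s => - w s) t (- - w t + - q t)).
  { intros t Ht. apply (is_derive_eq _ _ (opp (- w t + q t))).
    - now apply (is_derive_opp w t), Hd.
    - unfold opp; simpl. ring. }
  assert (Hiter : forall n t, t <= T -> Rabs (w t) <= th ^ n * B * exp (nu * t)).
  { induction n as [| n IH]; intros t Ht; [simpl; rewrite Rmult_1_l; auto |].
    replace (th ^ S n * B) with (th * (th ^ n * B)) by (simpl; ring).
    apply Rabs_le. split.
    - enough (- w t <= th * (th ^ n * B) * exp (nu * t)) by lra.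
      apply (delay_ineq_step (fun s => - w s) (fun s => - q s) h nu P T); auto.
      + intros s Hs. cbv beta. rewrite Rabs_Ropp. generalize (Rabs_maj2 (q s)) (Hq s Hs). lra.
      + intros s Hs. rewrite Rabs_Ropp. auto.
    - apply (delay_ineq_step w q h nu P T); auto.
      intros s Hs. generalize (Rle_abs (q s)) (Hq s Hs). lra. }
  intros t Ht. apply Rabs_eq_0, Rle_antisym; [| apply Rabs_pos].
  apply Rle_plus_epsilon. intros eta He. rewrite Rplus_0_l.
  assert (HS : 0 <= B * exp (nu * t)).
  { generalize (Hb t Ht) (Rabs_pos (w t)) (exp_pos (nu * t)). nra. }
  destruct (pow_mul_small th (B * exp (nu * t)) eta ltac:(lra) HS He) as [N HN].
  specialize (Hiter N t Ht). rewrite Rmult_assoc in Hiter. lra.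
Qed.

(* [exp s * (y1 s - y2 s)] has zero derivative as long as the delayed arguments agree. *)
Lemma solution_unique_forward h (g y1 y2 : R -> R) T : 0 < h ->
  is_solution h g y1 -> is_solution h g y2 ->
  (forall t, t <= T -> y1 t = y2 t) -> forall t, y1 t = y2 t.
Proof.
  intros Hh H1 H2 HT.
  assert (Hstep : forall n : nat, forall t, t <= T + INR n * h -> y1 t = y2 t).
  { induction n as [| n IH]; intros t Ht; [apply HT; simpl in Ht; lra |].
    rewrite S_INR in Ht. set (a := T + INR n * h) in *.
    assert (Ht_window : t <= a + h) by (unfold a; lra).
    destruct (Rle_dec t a) as [| Hta]; [now apply IH |].
    set (f := fun s => exp s * (y1 s - y2 s)).
    assert (Hf : Rabs (f t - f a - 0 * (t - a)) <= 0 * (t - a)).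
    { apply (MVT_increment f (fun _ => 0)); [lra | | intros; rewrite Rminus_0_r, Rabs_R0; lra].
      intros s Hs. unfold f.
      assert (E1 := is_derive_unique _ _ _ (H1 s)).
      assert (E2 := is_derive_unique _ _ _ (H2 s)).
      assert (Ey : y1 (s - h) = y2 (s - h)) by (apply IH; lra).
      auto_derive; [split; [eexists; apply H1 | split; [eexists; apply H2 | auto]] |].
      change (Derive (fun x => y1 x) s) with (Derive y1 s).
      change (Derive (fun x => y2 x) s) with (Derive y2 s).
      rewrite E1, E2, Ey. ring. }
    assert (Hfa : f a = 0) by (unfold f; rewrite IH by lra; ring).
    rewrite Hfa, !Rmult_0_l, !Rminus_0_r, Rabs_le_between in Hf.
    assert (Ht0 : exp t * (y1 t - y2 t) = 0) by (unfold f in Hf; lra).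
    apply Rmult_integral in Ht0. generalize (exp_pos t). destruct Ht0; lra. }
  intros t. destruct (exists_nat_ge ((t - T) / h)) as [n Hn].
  apply (Hstep n). apply Rmult_le_compat_r with (r := h) in Hn; [| lra].
  replace ((t - T) / h * h) with (t - T) in Hn by (field; lra). lra.
Qed.

(* Chaining windows gives a geometric series of ratio [exp (- lam h)]. *)
Lemma window_osc_increment (u : R -> R) h lam T0 E : 0 < h -> 0 < lam ->
  (forall a, a <= T0 -> forall s s', a - h <= s <= a -> a - h <= s' <= a ->
     u s - u s' <= E * exp (lam * a)) ->
  exists K, 0 <= K /\ forall s t, s <= t <= T0 -> Rabs (u s - u t) <= K * exp (lam * t).
Proof.
  intros Hh Hl Hwin.
  assert (HE : 0 <= E).
  { generalize (Hwin T0 (Rle_refl _) T0 T0 ltac:(lra) ltac:(lra)) (exp_pos (lam * T0)).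
    rewrite Rminus_diag. nra. }
  assert (Hel : 0 < exp (- lam * h) < 1).
  { split; [apply exp_pos |]. rewrite <- exp_0. apply exp_increasing. nra. }
  set (K := E / (1 - exp (- lam * h))).
  assert (HK : 0 <= K) by (unfold K; apply Rdiv_le_0_compat; lra).
  assert (HKfix : K * exp (- lam * h) + E = K) by (unfold K; field; lra).
  exists K. split; [exact HK |].
  assert (Hwin_abs : forall t s, t <= T0 -> t - h <= s <= t ->
                       Rabs (u s - u t) <= E * exp (lam * t)).
  { intros t s Ht Hs. apply Rabs_le. split.
    - generalize (Hwin t Ht t s ltac:(lra) ltac:(lra)). lra.
    - apply (Hwin t Ht); lra. }
  assert (Hn : forall n : nat, forall t s, t <= T0 -> t - INR n * h <= s <= t ->
                 Rabs (u s - u t) <= K * exp (lam * t)).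
  { induction n as [| n IH]; intros t s Ht Hs.
    - simpl in Hs. replace s with t by lra. rewrite Rminus_diag, Rabs_R0.
      apply Rmult_le_pos; [lra | apply Rlt_le, exp_pos].
    - rewrite S_INR in Hs. assert (Hp := exp_pos (lam * t)).
      destruct (Rle_dec (t - h) s) as [H1 | H1].
      + eapply Rle_trans; [apply Hwin_abs; lra |].
        apply Rmult_le_compat_r; [lra |].
        assert (0 <= K * exp (- lam * h)) by (apply Rmult_le_pos; lra). lra.
      + assert (T1 := IH (t - h) s ltac:(lra) ltac:(lra)).
        assert (T2 := Hwin_abs t (t - h) Ht ltac:(lra)).
        replace (exp (lam * (t - h))) with (exp (- lam * h) * exp (lam * t)) in T1
          by (rewrite <- exp_plus; f_equal; ring).
        replace (u s - u t) with ((u s - u (t - h)) + (u (t - h) - u t)) by ring.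
        eapply Rle_trans; [apply Rabs_triang |].
        replace (K * exp (lam * t)) with ((K * exp (- lam * h) + E) * exp (lam * t))
          by now rewrite HKfix.
        nra. }
  intros s t Hst. destruct (exists_nat_ge ((t - s) / h)) as [n Hn'].
  apply (Hn n t s); [lra |]. split; [| lra].
  apply Rmult_le_compat_r with (r := h) in Hn'; [| lra].
  replace ((t - s) / h * h) with (t - s) in Hn' by (field; lra). lra.
Qed.

Lemma exp_cauchy_limit (u : R -> R) lam T0 K : 0 < lam -> 0 <= K ->
  (forall s t, s <= t <= T0 -> Rabs (u s - u t) <= K * exp (lam * t)) ->
  exists L, forall t, t <= T0 -> Rabs (u t - L) <= K * exp (lam * t).
Proof.
  intros Hl HK Hinc.
  set (a := fun n : nat => u (T0 - INR n)).
  assert (Ca : ex_lim_seq_cauchy a).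
  { intros [eps Heps]. simpl.
    destruct (exp_mul_small (2 * K) eps lam T0 ltac:(lra) Heps Hl) as [s0 [Hs0 Hs0']].
    destruct (exists_nat_ge (T0 - s0)) as [N HN].
    exists N. intros n m Hn Hm. unfold a.
    apply le_INR in Hn. apply le_INR in Hm. assert (P := pos_INR N).
    assert (T1 := Hinc (T0 - INR n) (T0 - INR N) ltac:(lra)).
    assert (T2 := Hinc (T0 - INR m) (T0 - INR N) ltac:(lra)).
    assert (K * exp (lam * (T0 - INR N)) <= K * exp (lam * s0))
      by (apply Rmult_le_compat_l; [lra | apply exp_le; nra]).
    apply Rabs_le_between in T1. apply Rabs_le_between in T2.
    apply Rabs_def1; lra. }
  apply ex_lim_seq_cauchy_corr in Ca. destruct Ca as [L HL].
  apply is_lim_seq_spec in HL.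
  exists L. intros t Ht. apply Rle_plus_epsilon. intros eta He.
  destruct (HL (mkposreal eta He)) as [N1 HN1].
  destruct (exists_nat_ge (T0 - t)) as [N2 HN2].
  specialize (HN1 (Nat.max N1 N2) (Nat.le_max_l _ _)). simpl in HN1. unfold a in HN1.
  assert (INR N2 <= INR (Nat.max N1 N2)) by (apply le_INR, Nat.le_max_r).
  assert (T1 := Hinc (T0 - INR (Nat.max N1 N2)) t ltac:(lra)).
  apply Rabs_le_between in T1. apply Rabs_lt_between in HN1.
  apply Rabs_le. lra.
Qed.

Lemma relax_window_upper (u rho : R -> R) c h A lam T0 a M t :
  0 < c -> 0 < h -> 0 <= A -> 0 < lam ->
  (forall t, t <= T0 -> is_derive u t (c * (u (t - h) - u t) + rho t)) ->
  (forall t, t <= T0 -> Rabs (rho t) <= A * exp (lam * t)) ->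
  a + h <= T0 -> (forall s, a - h <= s <= a -> u s <= M) -> a <= t <= a + h ->
  u t <= M - exp (- c * (t - a)) * (M - u a) + A * exp (lam * (a + h)) / c.
Proof.
  intros Hc Hh HA Hl Hd Hr HaT HM Ht.
  set (E := A * exp (lam * (a + h))).
  assert (HE : 0 <= E) by (unfold E; apply Rmult_le_pos; [lra | apply Rlt_le, exp_pos]).
  set (phi := fun s => exp (c * (s - a)) * (u s - M - E / c)).
  assert (Hphi : phi t <= phi a).
  { apply (derive_nonpos_antitone phi
             (fun s => exp (c * (s - a)) * (c * (u (s - h) - M) + rho s - E))); [lra | |].
    - intros s Hs. unfold phi.
      assert (Es := is_derive_unique _ _ _ (Hd s ltac:(lra))).
      auto_derive; [eexists; apply (Hd s); lra |].
      change (Derive (fun x => u x) s) with (Derive u s). rewrite Es.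
      replace (s + - a) with (s - a) by ring. field. lra.
    - intros s Hs.
      assert (U := HM (s - h) ltac:(lra)).
      assert (R1 : rho s <= E).
      { apply Rle_trans with (A * exp (lam * s)).
        - generalize (Hr s ltac:(lra)) (Rle_abs (rho s)). lra.
        - apply Rmult_le_compat_l; [lra | apply exp_le; nra]. }
      assert (0 < exp (c * (s - a))) by apply exp_pos.
      assert (c * (u (s - h) - M) <= 0) by nra. nra. }
  unfold phi in Hphi. rewrite Rminus_diag, Rmult_0_r, exp_0, Rmult_1_l in Hphi.
  assert (Hinv := exp_opp_mul c (t - a)).
  assert (Hpos := exp_pos (c * (t - a))). assert (Hneg := exp_pos (- c * (t - a))).
  assert (P2 : u t - M - E / c <= exp (- c * (t - a)) * (u a - M - E / c)).
  { apply Rmult_le_reg_l with (exp (c * (t - a))); [exact Hpos |].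
    rewrite <- Rmult_assoc, (Rmult_comm _ (exp (- c * (t - a)))), Hinv. lra. }
  assert (0 <= exp (- c * (t - a)) * (E / c))
    by (apply Rmult_le_pos; [lra | apply Rdiv_le_0_compat; lra]).
  fold E. nra.
Qed.

Section Relaxation.

Variables (u rho : R -> R) (c h A lam T0 : R).
Hypotheses (c_gt0 : 0 < c) (h_gt0 : 0 < h) (A_ge0 : 0 <= A) (lam_gt0 : 0 < lam).
Hypothesis u_derive : forall t, t <= T0 -> is_derive u t (c * (u (t - h) - u t) + rho t).
Hypothesis rho_bound : forall t, t <= T0 -> Rabs (rho t) <= A * exp (lam * t).

(* [u] is pulled towards its values on [a - h, a] at rate [c], so on the next window it stays
   [exp (- c h) (max - u a)] below their maximum and [exp (- c h) (u a - min)] above their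
   minimum, up to the forcing [rho]. *)
Lemma relax_window_osc a d : a + h <= T0 ->
  (forall s s', a - h <= s <= a -> a - h <= s' <= a -> u s - u s' <= d) ->
  forall t t', a <= t <= a + h -> a <= t' <= a + h ->
  u t - u t' <= (1 - exp (- c * h)) * d + 2 * (A * exp (lam * (a + h)) / c).
Proof.
  intros HaT HD t t' Ht Ht'.
  assert (Hcont : forall x, a - h <= x <= a -> continuity_pt u x)
    by (intros x Hx; apply (is_derive_continuity_pt u x _ (u_derive x ltac:(lra)))).
  destruct (continuity_ab_maj u (a - h) a ltac:(lra) Hcont) as [s1 [Hs1 Hs1']].
  destruct (continuity_ab_min u (a - h) a ltac:(lra) Hcont) as [s2 [Hs2 Hs2']].
  assert (U1 := relax_window_upper u rho c h A lam T0 a (u s1) t c_gt0 h_gt0 A_ge0 lam_gt0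
                  u_derive rho_bound HaT Hs1 Ht).
  assert (U2 : - u t' <= - u s2 - exp (- c * (t' - a)) * (- u s2 - - u a)
                          + A * exp (lam * (a + h)) / c).
  { apply (relax_window_upper (fun s => - u s) (fun s => - rho s) c h A lam T0); auto.
    - intros s Hs. apply (is_derive_eq _ _ (opp (c * (u (s - h) - u s) + rho s))).
      + now apply (is_derive_opp u s), u_derive.
      + unfold opp; simpl; ring.
    - intros s Hs. rewrite Rabs_Ropp. auto.
    - intros s Hs. specialize (Hs2 s Hs). lra. }
  assert (Hd12 : u s1 - u s2 <= d) by (apply HD; lra).
  assert (X : 0 <= u s1 - u a) by (generalize (Hs1 a ltac:(lra)); lra).
  assert (Y : 0 <= u a - u s2) by (generalize (Hs2 a ltac:(lra)); lra).
  assert (E1 : exp (- c * h) <= exp (- c * (t - a))) by (apply exp_le; nra).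
  assert (E2 : exp (- c * h) <= exp (- c * (t' - a))) by (apply exp_le; nra).
  assert (exp (- c * h) * (u s1 - u a) <= exp (- c * (t - a)) * (u s1 - u a))
    by (apply Rmult_le_compat_r; auto).
  assert (exp (- c * h) * (u a - u s2) <= exp (- c * (t' - a)) * (u a - u s2))
    by (apply Rmult_le_compat_r; auto).
  assert (exp (- c * h) <= 1) by (rewrite <- exp_0; apply exp_le; nra).
  assert (0 <= d) by lra.
  nra.
Qed.

Lemma relax_osc_decay B : (forall t, t <= T0 -> 0 <= u t <= B) ->
  exists E, forall a, a <= T0 -> forall s s', a - h <= s <= a -> a - h <= s' <= a ->
    u s - u s' <= E * exp (lam * a).
Proof.
  intros HB.
  set (th := 1 - exp (- c * h)).
  assert (Hech : 0 < exp (- c * h) < 1).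
  { split; [apply exp_pos |]. rewrite <- exp_0. apply exp_increasing. nra. }
  assert (Hth : 0 <= th < 1) by (unfold th; lra).
  set (K1 := 2 * A * exp (lam * h) / c).
  assert (HK1 : 0 <= K1).
  { unfold K1. apply Rdiv_le_0_compat; [generalize (exp_pos (lam * h)); nra | lra]. }
  set (E := K1 / (1 - th)).
  assert (HE : 0 <= E) by (unfold E; apply Rdiv_le_0_compat; lra).
  assert (HEfix : th * E + K1 = E) by (unfold E; field; lra).
  assert (Hiter : forall n a, a <= T0 -> forall s s', a - h <= s <= a -> a - h <= s' <= a ->
                    u s - u s' <= th ^ n * B + E * exp (lam * a)).
  { induction n as [| n IH]; intros a Ha s s' Hs Hs'.
    - generalize (HB s ltac:(lra)) (HB s' ltac:(lra)).
      assert (0 <= E * exp (lam * a)) by (apply Rmult_le_pos; [lra | apply Rlt_le, exp_pos]).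
      simpl. lra.
    - assert (K := relax_window_osc (a - h) (th ^ n * B + E * exp (lam * (a - h)))
                     ltac:(lra) (IH (a - h) ltac:(lra)) s s' ltac:(lra) ltac:(lra)).
      replace (a - h + h) with a in K by ring. fold th in K.
      assert (E2 : 2 * (A * exp (lam * a) / c) = K1 * exp (lam * (a - h))).
      { unfold K1. replace (lam * a) with (lam * h + lam * (a - h)) by ring.
        rewrite exp_plus. field. lra. }
      rewrite E2 in K. simpl.
      assert (E * exp (lam * (a - h)) <= E * exp (lam * a))
        by (apply Rmult_le_compat_l; [lra | apply exp_le; nra]).
      nra. }
  exists E. intros a Ha s s' Hs Hs'. apply Rle_plus_epsilon. intros eta He.
  assert (HB0 : 0 <= B) by (generalize (HB s ltac:(lra)); lra).
  destruct (pow_mul_small th B eta Hth HB0 He) as [N HN].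
  generalize (Hiter N a Ha s s' Hs Hs'). lra.
Qed.

End Relaxation.

(* [delay_char h z = p] is the characteristic equation [z = -1 + p exp (- z h)] of the
   linearisation [x' = - x + p x(t - h)] at [0]. *)
Definition delay_char (h z : R) : R := (1 + z) * exp (z * h).

Lemma delay_char_lt h a b : 0 < h -> 0 <= a < b -> delay_char h a < delay_char h b.
Proof.
  intros Hh Hab. unfold delay_char.
  assert (exp (a * h) < exp (b * h)) by (apply exp_increasing; nra).
  generalize (exp_pos (a * h)). nra.
Qed.

Lemma delay_char_root h p lam : lam = -1 + p * exp (- lam * h) -> p = delay_char h lam.
Proof.
  intros Hlam. unfold delay_char. rewrite Hlam at 1.
  replace (1 + (-1 + p * exp (- lam * h))) with (p * exp (- lam * h)) by ring.
  now rewrite Rmult_assoc, exp_opp_mul, Rmult_1_r.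
Qed.

Lemma scaled_solution_derive h mu (g psi : R -> R) t : is_solution h g psi ->
  is_derive (fun s => psi s * exp (- mu * s)) t
    (- (1 + mu) * (psi t * exp (- mu * t)) + exp (- mu * t) * g (psi (t - h))).
Proof.
  intros Hs. assert (E := is_derive_unique _ _ _ (Hs t)).
  auto_derive; [eexists; apply Hs |].
  change (Derive (fun x => psi x) t) with (Derive psi t). rewrite E. ring.
Qed.

Section Weighted_functional.

Variables (h mu : R) (g psi : R -> R).
Hypotheses (h_gt0 : 0 < h) (mu_gt0 : 0 < mu).
Hypotheses (psi_sol : is_solution h g psi) (psi_ge0 : forall t, 0 <= psi t).

Let u := fun s => psi s * exp (- mu * s).

(* Its derivative sees the delayed value [psi (t - h)] only, never [psi t]. *)
Definition weighted_functional (t : R) : R := u t + (1 + mu) * RInt u (t - h) t.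

Lemma weighted_functional_derive t :
  is_derive weighted_functional t
    (exp (- mu * t) * (g (psi (t - h)) - delay_char h mu * psi (t - h))).
Proof.
  assert (Hu : forall x, is_derive u x _) by (intros x; apply scaled_solution_derive, psi_sol).
  assert (Hc : forall x, continuous u x).
  { intros x. apply (ex_derive_continuous (K := R_AbsRing) (V := R_NormedModule)).
    eexists. apply Hu. }
  assert (Hw := is_derive_scal _ t (1 + mu) _ (is_derive_RInt_window u h t Hc)).
  apply (is_derive_eq _ _ _ _ (is_derive_plus u _ t _ _ (Hu t) Hw)).
  unfold plus, scal, u, delay_char; simpl. unfold mult; simpl.
  replace (- mu * (t - h)) with (- mu * t + mu * h) by ring.
  rewrite exp_plus. ring.
Qed.

Lemma scaled_le_weighted_functional t : u t <= weighted_functional t.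
Proof.
  unfold weighted_functional.
  assert (0 <= RInt u (t - h) t); [| nra].
  apply RInt_ge_0; [lra | |].
  - apply (ex_RInt_continuous (V := R_CompleteNormedModule)). intros z _.
    apply (ex_derive_continuous (K := R_AbsRing) (V := R_NormedModule)).
    eexists. apply scaled_solution_derive, psi_sol.
  - intros x _. unfold u. apply Rmult_le_pos; [auto | apply Rlt_le, exp_pos].
Qed.

(* [weighted_functional t + A / (al - mu) * exp ((al - mu) t)] is nondecreasing. *)
Lemma solution_exp_bound al A T0 : mu < al -> 0 <= A ->
  (forall t, t <= T0 ->
     delay_char h mu * psi (t - h) - A * exp (al * t) <= g (psi (t - h))) ->
  exists B, forall t, t <= T0 -> psi t <= B * exp (mu * t).
Proof.
  intros Hal HA Hg.
  set (Phi := fun t => weighted_functional t + A / (al - mu) * exp ((al - mu) * t)).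
  exists (Phi T0). intros t Ht.
  assert (HPhi : Phi t <= Phi T0).
  { apply (derive_nonneg_monotone Phi (fun x =>
             exp (- mu * x) * (g (psi (x - h)) - delay_char h mu * psi (x - h))
             + A * exp ((al - mu) * x))); [exact Ht | |].
    - intros x _. apply (is_derive_plus weighted_functional); [apply weighted_functional_derive |].
      apply (is_derive_eq _ _ (A / (al - mu) * ((al - mu) * exp ((al - mu) * x))));
        [auto_derive; auto; try ring | field; lra].
    - intros x Hx. specialize (Hg x ltac:(lra)).
      replace (exp ((al - mu) * x)) with (exp (- mu * x) * exp (al * x))
        by (rewrite <- exp_plus; f_equal; ring).
      generalize (exp_pos (- mu * x)). nra. }
  rewrite <- (unscale_exp mu t (psi t)).
  apply Rmult_le_compat_r; [apply Rlt_le, exp_pos |].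
  assert (0 <= A / (al - mu) * exp ((al - mu) * t))
    by (apply Rmult_le_pos; [apply Rdiv_le_0_compat; lra | apply Rlt_le, exp_pos]).
  generalize (scaled_le_weighted_functional t). unfold Phi in *. unfold u. lra.
Qed.

End Weighted_functional.

Lemma is_solution_shift h (g psi : R -> R) c :
  is_solution h g psi -> is_solution h g (fun t => psi (t + c)).
Proof.
  intros Hs t. assert (E := is_derive_unique _ _ _ (Hs (t + c))).
  apply (is_derive_eq _ _ (Derive psi (t + c))).
  - auto_derive; [eexists; apply Hs |].
    change (Derive (fun x => psi x) (t + c)) with (Derive psi (t + c)). ring.
  - rewrite E. now replace (t - h + c) with (t + c - h) by ring.
Qed.

Lemma is_lim_m_infty_shift (psi : R -> R) (c l : R) :
  is_lim psi m_infty l -> is_lim (fun t => psi (t + c)) m_infty l.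
Proof.
  intros H. apply is_lim_spec in H. apply is_lim_spec. simpl in H |- *. intros eps.
  destruct (H eps) as [M HM]. exists (M - c). intros x Hx. apply HM. lra.
Qed.

Section Front.

Variables (h p lam : R) (g dg : R -> R).
Hypotheses (h_gt0 : 0 < h) (g_C1 : C1_Rplus_Rplus g dg) (g_0 : g 0 = 0) (dg_0 : dg 0 = p).
Hypotheses (p_gt1 : 1 < p) (lam_gt0 : 0 < lam) (lam_root : lam = -1 + p * exp (- lam * h)).

Let p_char : p = delay_char h lam := delay_char_root h p lam lam_root.

Let g_derive : forall x, 0 < x -> is_derive g x (dg x).
Proof. apply g_C1. Qed.

Let g_slope_0 : filterlim (fun x => (g x - g 0) / x) (at_right 0) (locally p).
Proof. rewrite <- dg_0. apply g_C1. Qed.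

Let dg_lim_0 : filterlim dg (at_right 0) (locally p).
Proof. rewrite <- dg_0. apply g_C1. Qed.

(* For [nu > lam] the linearised equation has no nonzero solution that is [O (exp (nu t))]
   at [-oo]; so two solutions that close to each other coincide there, hence everywhere. *)
Lemma solutions_eq_of_close (y1 y2 : R -> R) nu S T :
  is_solution h g y1 -> is_solution h g y2 ->
  (forall t, 0 <= y1 t) -> (forall t, 0 <= y2 t) ->
  is_lim y1 m_infty 0 -> is_lim y2 m_infty 0 -> lam < nu ->
  (forall t, t <= T -> Rabs (y1 t - y2 t) <= S * exp (nu * t)) ->
  forall t, y1 t = y2 t.
Proof.
  intros Hs1 Hs2 Hp1 Hp2 Hl1 Hl2 Hnu Hclose.
  set (Pn := delay_char h nu).
  assert (HPn : p < Pn) by (rewrite p_char; apply delay_char_lt; lra).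
  assert (HPn_exp : Pn * exp (- nu * h) = 1 + nu)
    by (unfold Pn, delay_char; rewrite Rmult_assoc, (Rmult_comm (exp _)), exp_opp_mul; ring).
  destruct (germ_lipschitz g dg p g_derive g_slope_0 dg_lim_0 g_0 ((Pn - p) / 2)
              ltac:(lra) ltac:(lra)) as [d [Hd Hlip]].
  destruct (small_near_m_infty y1 Hl1 d Hd) as [T1 HT1].
  destruct (small_near_m_infty y2 Hl2 d Hd) as [T2 HT2].
  set (T' := Rmin T (Rmin T1 T2)).
  assert (HT' : T' <= T /\ T' <= T1 /\ T' <= T2).
  { unfold T'. generalize (Rmin_l T (Rmin T1 T2)) (Rmin_r T (Rmin T1 T2))
      (Rmin_l T1 T2) (Rmin_r T1 T2). lra. }
  apply (solution_unique_forward h g y1 y2 T' h_gt0 Hs1 Hs2).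
  intros t Ht. enough (y1 t - y2 t = 0) by lra. revert t Ht.
  apply (delay_ineq_vanish (fun t => y1 t - y2 t) (fun t => g (y1 (t - h)) - g (y2 (t - h)))
           h nu (p + (Pn - p) / 2) S T'); [lra | lra | lra | | | | ].
  - apply Rlt_le_trans with (Pn * exp (- nu * h)); [| lra].
    apply Rmult_lt_compat_r; [apply exp_pos | lra].
  - intros t _. apply (is_derive_eq _ _ ((- y1 t + g (y1 (t - h))) - (- y2 t + g (y2 (t - h))))).
    + apply (is_derive_minus y1 y2); [apply Hs1 | apply Hs2].
    + ring.
  - intros t Ht. generalize (HT1 (t - h) ltac:(lra)) (HT2 (t - h) ltac:(lra)).
    rewrite !Rabs_pos_eq by auto. intros. apply Hlip; split; auto.
  - intros t Ht. apply Hclose. lra.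
Qed.

Variables (L x0 : R).
Hypotheses (x0_gt0 : 0 < x0)
  (germ_quad : forall x, 0 <= x < x0 -> Rabs (g x - p * x) <= L * x ^ 2).

Let L_ge0 : 0 <= L.
Proof.
  assert (0 < (x0 / 2) ^ 2) by (apply pow_lt; lra).
  generalize (germ_quad (x0 / 2) ltac:(lra)) (Rabs_pos (g (x0 / 2) - p * (x0 / 2))). nra.
Qed.

Variables (K : R) (psi : R -> R).
Hypotheses (K_gt0 : 0 < K) (psi_front : is_front h K g psi).

Let psi_sol : is_solution h g psi. Proof. apply psi_front. Qed.
Let psi_ge0 : forall t, 0 <= psi t. Proof. apply psi_front. Qed.
Let psi_lim_m_infty : is_lim psi m_infty 0. Proof. apply psi_front. Qed.

(* First [psi = O (exp (mu t))] for some [mu < lam] with [delay_char h mu < p]; the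
   quadratic germ then makes the defect of the linearisation [O (exp (2 mu t))], and
   [2 mu > lam]. *)
Lemma front_exp_bound :
  exists T0 B, forall t, t <= T0 -> psi t < x0 /\ psi t <= B * exp (lam * t).
Proof.
  set (mu := 3 * lam / 4).
  assert (Hmu : delay_char h mu < p) by (rewrite p_char; apply delay_char_lt; unfold mu; lra).
  destruct (germ_linear_bounds g p g_slope_0 g_0 (p - delay_char h mu) ltac:(lra))
    as [d [Hd Hlin]].
  destruct (small_near_m_infty psi psi_lim_m_infty (Rmin d x0) ltac:(apply Rmin_pos; lra))
    as [T0 HT0].
  assert (Hsmall : forall t, t <= T0 -> psi t < d /\ psi t < x0).
  { intros t Ht. generalize (HT0 t Ht) (Rmin_l d x0) (Rmin_r d x0).
    rewrite Rabs_pos_eq by auto. lra. }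
  destruct (solution_exp_bound h mu g psi h_gt0 ltac:(unfold mu; lra) psi_sol psi_ge0
              (mu + 1) 0 T0 ltac:(lra) ltac:(lra)) as [C HC].
  { intros t Ht. destruct (Hlin (psi (t - h))) as [Hg _].
    - split; [auto | apply Hsmall; lra].
    - rewrite Rmult_0_l, Rminus_0_r. replace (p - (p - delay_char h mu)) with (delay_char h mu)
        in Hg by ring. exact Hg. }
  destruct (solution_exp_bound h lam g psi h_gt0 lam_gt0 psi_sol psi_ge0
              (2 * mu) (L * C ^ 2) T0 ltac:(unfold mu; lra)
              ltac:(apply Rmult_le_pos; [apply L_ge0 | apply pow2_ge_0])) as [B HB].
  { intros t Ht. rewrite <- p_char.
    assert (Hq := germ_quad (psi (t - h)) (conj (psi_ge0 _) (proj2 (Hsmall (t - h) ltac:(lra))))).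
    assert (Hsq : psi (t - h) ^ 2 <= C ^ 2 * exp (2 * mu * t)).
    { apply Rle_trans with ((C * exp (mu * (t - h))) ^ 2).
      - apply pow_incr. split; [auto | apply HC; lra].
      - rewrite Rpow_mult_distr, exp_sqr. apply Rmult_le_compat_l; [apply pow2_ge_0 |].
        apply exp_le. unfold mu. nra. }
    apply Rmult_le_compat_l with (r := L) in Hsq; [| apply L_ge0].
    apply Rabs_le_between in Hq. lra. }
  exists T0, B. intros t Ht. split; [apply Hsmall; lra | apply HB; lra].
Qed.

Lemma front_scaled_converges : exists L0 Kc T, 0 <= Kc /\
  forall t, t <= T -> Rabs (psi t * exp (- lam * t) - L0) <= Kc * exp (lam * t).
Proof.
  destruct front_exp_bound as [T0 [B HB]].
  assert (HB0 : 0 <= B).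
  { destruct (HB T0 (Rle_refl _)) as [_ H]. generalize (psi_ge0 T0) (exp_pos (lam * T0)). nra. }
  set (u := fun t => psi t * exp (- lam * t)).
  set (rho := fun t => exp (- lam * t) * (g (psi (t - h)) - p * psi (t - h))).
  assert (Hu_derive : forall t, is_derive u t ((1 + lam) * (u (t - h) - u t) + rho t)).
  { intros t. apply (is_derive_eq _ _ _ _ (scaled_solution_derive h lam g psi t psi_sol)).
    unfold u, rho. rewrite p_char. unfold delay_char.
    replace (exp (- lam * (t - h))) with (exp (- lam * t) * exp (lam * h))
      by (rewrite <- exp_plus; f_equal; ring).
    ring. }
  assert (Hu_bound : forall t, t <= T0 -> 0 <= u t <= B).
  { intros t Ht. unfold u. split; [apply Rmult_le_pos; [auto | apply Rlt_le, exp_pos] |].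
    rewrite <- (unscale_exp lam t B), Rmult_assoc, (Rmult_comm (exp _)), <- Rmult_assoc.
    apply Rmult_le_compat_r; [apply Rlt_le, exp_pos | apply HB; lra]. }
  assert (Hrho : forall t, t <= T0 -> Rabs (rho t) <= L * B ^ 2 * exp (lam * t)).
  { intros t Ht. unfold rho. rewrite Rabs_mult, (Rabs_pos_eq (exp _)) by apply Rlt_le, exp_pos.
    destruct (HB (t - h) ltac:(lra)) as [Hsmall Hle].
    assert (Hq := germ_quad (psi (t - h)) (conj (psi_ge0 _) Hsmall)).
    assert (Hsq : psi (t - h) ^ 2 <= B ^ 2 * exp (2 * lam * (t - h))).
    { replace (2 * lam * (t - h)) with (2 * (lam * (t - h))) by ring.
      rewrite <- exp_sqr, <- Rpow_mult_distr. apply pow_incr. split; auto. }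
    assert (Hexp : exp (- lam * t) * exp (2 * lam * (t - h)) <= exp (lam * t)).
    { rewrite <- exp_plus. apply exp_le. nra. }
    apply Rle_trans with (exp (- lam * t) * (L * (B ^ 2 * exp (2 * lam * (t - h))))).
    - apply Rmult_le_compat_l; [apply Rlt_le, exp_pos |].
      eapply Rle_trans; [exact Hq |]. apply Rmult_le_compat_l; [apply L_ge0 | exact Hsq].
    - replace (exp (- lam * t) * (L * (B ^ 2 * exp (2 * lam * (t - h)))))
        with (L * B ^ 2 * (exp (- lam * t) * exp (2 * lam * (t - h)))) by ring.
      apply Rmult_le_compat_l; [apply Rmult_le_pos; [apply L_ge0 | apply pow2_ge_0] | exact Hexp]. }
  assert (HA : 0 <= L * B ^ 2) by (apply Rmult_le_pos; [apply L_ge0 | apply pow2_ge_0]).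
  destruct (relax_osc_decay u rho (1 + lam) h (L * B ^ 2) lam T0 ltac:(lra) h_gt0 HA lam_gt0
              (fun t _ => Hu_derive t) Hrho B Hu_bound) as [E HE].
  destruct (window_osc_increment u h lam T0 E h_gt0 lam_gt0 HE) as [Kc [HKc Hinc]].
  destruct (exp_cauchy_limit u lam T0 Kc lam_gt0 HKc Hinc) as [L0 HL0].
  now exists L0, Kc, T0.
Qed.

Let zero_solution : is_solution h g (fun _ => 0).
Proof. intros t. apply (is_derive_eq _ _ 0); [auto_derive; auto | rewrite g_0; ring]. Qed.

(* Otherwise [psi = O (exp (2 lam t))], and [psi] would coincide with the zero solution. *)
Lemma front_scaled_limit_pos L0 Kc T :
  (forall t, t <= T -> Rabs (psi t * exp (- lam * t) - L0) <= Kc * exp (lam * t)) -> 0 < L0.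
Proof.
  intros Hconv. destruct (Rlt_le_dec 0 L0) as [| HL0]; [assumption | exfalso].
  destruct (nonzero_of_lim_p_infty psi K K_gt0 ltac:(apply psi_front)) as [t1 Ht1].
  enough (Hzero : forall t, psi t = 0) by exact (Ht1 (Hzero t1)).
  apply (solutions_eq_of_close psi (fun _ => 0) (2 * lam) Kc T psi_sol zero_solution psi_ge0).
  - intros; lra.
  - exact psi_lim_m_infty.
  - apply is_lim_const.
  - lra.
  - intros t Ht. rewrite Rminus_0_r, Rabs_pos_eq by auto.
    assert (H := scaled_estimate_shift psi lam L0 Kc T 0 Hconv t ltac:(lra)).
    rewrite Rplus_0_r, !Rmult_0_r, !exp_0, !Rmult_1_r in H.
    apply Rabs_le_between in H. generalize (exp_pos (lam * t)). nra.
Qed.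

Lemma front_value_expansion : exists t0 C T, 0 <= C /\
  forall t, t <= T -> Rabs (psi (t - t0) - exp (lam * t)) <= C * exp (2 * lam * t).
Proof.
  destruct front_scaled_converges as [L0 [Kc [T [HKc Hconv]]]].
  assert (HL0 := front_scaled_limit_pos L0 Kc T Hconv).
  set (t0 := ln L0 / lam).
  assert (Et0 : L0 * exp (lam * (- t0)) = 1).
  { unfold t0. replace (lam * - (ln L0 / lam)) with (- ln L0) by (field; lra).
    rewrite exp_Ropp, exp_ln by exact HL0. field. lra. }
  exists t0, (Kc * exp (2 * lam * (- t0))), (T + t0). split.
  { apply Rmult_le_pos; [exact HKc | apply Rlt_le, exp_pos]. }
  intros t Ht. rewrite <- (Rmult_1_l (exp (lam * t))), <- Et0.
  apply (scaled_estimate_shift psi lam L0 Kc T (- t0) Hconv). lra.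
Qed.

(* [psi' (t - t0) = - psi (t - t0) + p psi (t - t0 - h) + O (psi (t - t0 - h) ^ 2)], and
   [p exp (- lam h) = 1 + lam] turns the main terms into [lam exp (lam t)]. *)
Lemma front_expansion : exists t0 C T, 0 <= C /\ forall t, t <= T ->
  Rabs (psi (t - t0) - exp (lam * t)) <= C * exp (2 * lam * t) /\
  Rabs (Derive psi (t - t0) - lam * exp (lam * t)) <= C * exp (2 * lam * t).
Proof.
  destruct front_value_expansion as [t0 [C1 [T1 [HC1 Hval]]]].
  destruct (small_near_m_infty psi psi_lim_m_infty x0 x0_gt0) as [T2 HT2].
  set (C := (1 + p) * C1 + L * (1 + C1) ^ 2 + C1).
  assert (HL := L_ge0).
  assert (HC : C1 <= C) by (unfold C; generalize (pow2_ge_0 (1 + C1)); nra).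
  exists t0, C, (Rmin (Rmin T1 (T2 + t0)) 0). split; [lra |].
  intros t Ht. generalize (Rmin_l (Rmin T1 (T2 + t0)) 0) (Rmin_r (Rmin T1 (T2 + t0)) 0)
    (Rmin_l T1 (T2 + t0)) (Rmin_r T1 (T2 + t0)). intros.
  assert (He2 := exp_pos (2 * lam * t)). split.
  { eapply Rle_trans; [apply Hval; lra |]. apply Rmult_le_compat_r; lra. }
  set (a := psi (t - t0 - h)).
  assert (Hnow := Hval t ltac:(lra)).
  assert (Hdel := Hval (t - h) ltac:(lra)).
  replace (t - h - t0) with (t - t0 - h) in Hdel by ring. fold a in Hdel.
  assert (Hsmall : 0 <= a < x0).
  { split; [apply psi_ge0 |]. generalize (HT2 (t - t0 - h) ltac:(lra)).
    rewrite Rabs_pos_eq by apply psi_ge0. auto. }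
  assert (Hexp_delay : exp (lam * (t - h)) = exp (- lam * h) * exp (lam * t))
    by (rewrite <- exp_plus; f_equal; ring).
  assert (Hchar : p * exp (- lam * h) = 1 + lam) by lra.
  assert (E2d : exp (2 * lam * (t - h)) <= exp (2 * lam * t)) by (apply exp_le; nra).
  assert (E2l : exp (2 * lam * t) <= exp (lam * t)) by (apply exp_le; nra).
  assert (Eh : exp (- lam * h) <= 1) by (rewrite <- exp_0; apply exp_le; nra).
  assert (He1 := exp_pos (lam * t)). assert (Heh := exp_pos (- lam * h)).
  apply Rabs_le_between in Hnow. apply Rabs_le_between in Hdel.
  rewrite Hexp_delay in Hdel.
  assert (Ha : a <= (1 + C1) * exp (lam * t)).
  { assert (C1 * exp (2 * lam * (t - h)) <= C1 * exp (lam * t))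
      by (apply Rmult_le_compat_l; lra).
    nra. }
  assert (Ha2 : L * a ^ 2 <= L * ((1 + C1) ^ 2 * exp (2 * lam * t))).
  { apply Rmult_le_compat_l; [lra |].
    replace (2 * lam * t) with (2 * (lam * t)) by ring.
    rewrite <- exp_sqr, <- Rpow_mult_distr. apply pow_incr. lra. }
  assert (Hq := germ_quad a Hsmall). apply Rabs_le_between in Hq.
  rewrite (is_derive_unique _ _ _ (psi_sol (t - t0))). fold a.
  assert (C1 * exp (2 * lam * (t - h)) <= C1 * exp (2 * lam * t))
    by (apply Rmult_le_compat_l; lra).
  assert (p * (exp (- lam * h) * exp (lam * t)) = (1 + lam) * exp (lam * t))
    by (rewrite <- Rmult_assoc, Hchar; ring).
  apply Rabs_le. unfold C. split; nra.
Qed.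

Lemma front_derive_pos : exists T, forall t, t <= T -> 0 < Derive psi t.
Proof.
  destruct front_expansion as [t0 [C [T [HC Hexp]]]].
  destruct (exp_mul_small C lam lam 0 HC lam_gt0 lam_gt0) as [s [Hs Hs']].
  exists (Rmin T s - t0). intros t Ht.
  generalize (Rmin_l T s) (Rmin_r T s). intros.
  destruct (Hexp (t + t0) ltac:(lra)) as [_ D].
  replace (t + t0 - t0) with t in D by ring. apply Rabs_le_between in D.
  assert (Hlt : C * exp (lam * (t + t0)) < lam).
  { eapply Rle_lt_trans; [| exact Hs']. apply Rmult_le_compat_l; [lra | apply exp_le; nra]. }
  replace (2 * lam * (t + t0)) with (2 * (lam * (t + t0))) in D by ring.
  rewrite <- exp_sqr in D. generalize (exp_pos (lam * (t + t0))). nra.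
Qed.

Lemma front_eq_shift_of_scaled_limit (phi : R -> R) Lf Kf Tf :
  is_solution h g phi -> (forall t, 0 <= phi t) -> is_lim phi m_infty 0 -> 0 < Lf ->
  (forall t, t <= Tf -> Rabs (phi t * exp (- lam * t) - Lf) <= Kf * exp (lam * t)) ->
  exists c, forall t, phi t = psi (t + c).
Proof.
  intros Hsol Hge0 Hlim HLf Hf.
  destruct front_scaled_converges as [Lp [Kp [Tp [HKp Hp]]]].
  assert (HLp := front_scaled_limit_pos Lp Kp Tp Hp).
  set (c := ln (Lf / Lp) / lam).
  assert (Ec : Lp * exp (lam * c) = Lf).
  { unfold c. replace (lam * (ln (Lf / Lp) / lam)) with (ln (Lf / Lp)) by (field; lra).
    rewrite exp_ln by (apply Rdiv_lt_0_compat; lra). field. lra. }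
  exists c.
  apply (solutions_eq_of_close phi (fun t => psi (t + c)) (2 * lam)
           (Kf + Kp * exp (2 * lam * c)) (Rmin Tf (Tp - c))); auto.
  - now apply is_solution_shift.
  - now apply is_lim_m_infty_shift.
  - lra.
  - intros t Ht. generalize (Rmin_l Tf (Tp - c)) (Rmin_r Tf (Tp - c)). intros.
    assert (Hphi := scaled_estimate_shift phi lam Lf Kf Tf 0 Hf t ltac:(lra)).
    rewrite Rplus_0_r, !Rmult_0_r, !exp_0, !Rmult_1_r in Hphi.
    assert (Hpsi := scaled_estimate_shift psi lam Lp Kp Tp c Hp t ltac:(lra)).
    rewrite Ec in Hpsi.
    replace (phi t - psi (t + c))
      with ((phi t - Lf * exp (lam * t)) - (psi (t + c) - Lf * exp (lam * t))) by ring.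
    eapply Rle_trans; [apply Rabs_triang |]. rewrite Rabs_Ropp. lra.
Qed.

End Front.

Theorem lemma8 (h K p : R) (g dg psi : R -> R) (lam : R) :
  0 < h -> 0 < K ->
  C1_Rplus_Rplus g dg -> g 0 = 0 -> g K = K -> dg 0 = p -> 1 < p ->
  is_front h K g psi ->
  0 < lam -> lam = -1 + p * exp (- lam * h) ->
  (* part 1: the finite limit g''(0+) exists *)
  ((exists eps d2 q, 0 < eps /\
      (forall x, 0 < x < eps -> is_derive dg x (d2 x)) /\
      filterlim d2 (at_right 0) (locally q)) ->
    (forall delta, 0 < delta ->
      exists t0 C T, forall t, t <= T ->
        Rabs (psi (t - t0) - exp (lam * t)) <= C * exp ((2 * lam - delta) * t) /\
        Rabs (Derive psi (t - t0) - lam * exp (lam * t))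
          <= C * exp ((2 * lam - delta) * t)) /\
    (exists T, forall t, t <= T -> 0 < Derive psi t)) /\
  (* part 2: g'' exists and is bounded on [0, eps) *)
  ((exists eps d2 M, 0 < eps /\
      (forall x, 0 < x < eps -> is_derive dg x (d2 x)) /\
      filterlim (fun x => (dg x - dg 0) / x) (at_right 0) (locally (d2 0)) /\
      (forall x, 0 <= x < eps -> Rabs (d2 x) <= M)) ->
    forall phi, is_front h K g phi -> exists c, forall t, phi t = psi (t + c)).
Proof.
  intros Hh HK HC1 g0 _ dg0 Hp Hf Hl Hlam.
  pose proof HC1 as [Hgd [_ [Hslope [Hdg _]]]]. rewrite dg0 in Hslope, Hdg.
  split.
  - intros [eps [d2 [q [He [Hd2 Hq]]]]].
    destruct (germ_quadratic_of_d2_lim g dg d2 p eps q Hgd Hslope Hdg g0 He Hd2 Hq)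
      as [x0 [Hx0 Hquad]].
    destruct (front_expansion h p lam g dg Hh HC1 g0 dg0 Hp Hl Hlam _ _ Hx0 Hquad K psi HK Hf)
      as [t0 [C [T [HC Hexp]]]].
    split.
    + intros delta Hdelta. exists t0, C, (Rmin T 0). intros t Ht.
      generalize (Rmin_l T 0) (Rmin_r T 0). intros.
      assert (C * exp (2 * lam * t) <= C * exp ((2 * lam - delta) * t))
        by (apply Rmult_le_compat_l; [lra | apply exp_le; nra]).
      destruct (Hexp t ltac:(lra)). split; lra.
    + exact (front_derive_pos h p lam g dg Hh HC1 g0 dg0 Hp Hl Hlam _ _ Hx0 Hquad K psi HK Hf).
  - intros [eps [d2 [M [He [Hd2 [_ HM]]]]]] phi Hphi.
    assert (Hquad := germ_quadratic g dg p Hgd Hslope Hdg g0 d2 eps M Hd2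
                       (fun x Hx => HM x ltac:(lra))).
    destruct (front_scaled_converges h p lam g dg Hh HC1 g0 dg0 Hl Hlam M eps He Hquad K phi Hphi)
      as [Lf [Kf [Tf [_ Hconv]]]].
    apply (front_eq_shift_of_scaled_limit h p lam g dg Hh HC1 g0 dg0 Hp Hl Hlam M eps He Hquad
             K psi HK Hf phi Lf Kf Tf); try apply Hphi; [| exact Hconv].
    exact (front_scaled_limit_pos h p lam g dg Hh HC1 g0 dg0 Hp Hl Hlam K phi HK Hphi
             Lf Kf Tf Hconv).
Qed.
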